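(* Let $(X,p)$ be a complete partial metric space, let $x_o,y_o\in X$, and let $f,g:X\to X$ be functions such that $\{f^i(x_o)\}_{i\in\mathbb{N}}$ and $\{g^i(y_o)\}_{i\in\mathbb{N}}$ form a Cauchy pair. If $f$ and $g$ are non-expansive, $f$ is weakly orbitally continuous at $x_o$ and $g$ is weakly orbitally continuous at $y_o$, then $f$ and $g$ have a common fixed point.
   Context: A partial metric on $X$ is $p:X\times X\to\mathbb{R}$ with, for all $x,y,z$: $p(x,x)\le p(x,y)$; $p(x,y)=p(y,x)$; $p(x,x)=p(x,y)=p(y,y)$ iff $x=y$; $p(x,y)\le p(x,z)+p(z,y)-p(z,z)$. A point $a$ is a limit of $\{x_i\}$ iff for every $\epsilon>0$ there is $N$ with $p(a,x_i)-p(a,a)<\epsilon$ for all $i>N$ (convergence in the topology generated by the balls $\{y\mid p(x,y)-p(x,x)<\epsilon\}$). $\{x_i\}$ is Cauchy with central distance $r$ if for every $\epsilon>0$ there is $N$ with $|p(x_i,x_j)-r|<\epsilon$ for all $i\ge j>N$; a special limit is a limit $a$ with $p(a,a)=r$; $(X,p)$ is complete if every Cauchy sequence has a special limit. Sequences $\{x_i\},\{y_i\}$ form a Cauchy pair if there is $r\in\mathbb{R}$ such that for every $\epsilon>0$ there is $N$ with $r-\epsilon<\min\{p(x_i,x_i),p(y_j,y_j)\}\le p(x_i,y_j)<r+\epsilon$ for all $i,j>N$. $f^0(x)=x$, $f^{i+1}(x)=f(f^i(x))$. $f$ is non-expansive if $p(f(x),f(y))\le p(x,y)$ for all $x,y$;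 $f$ is weakly orbitally continuous at $x_o$ if whenever $a$ is a special limit of $\{f^i(x_o)\}$, $f(a)$ is a limit of $\{f^i(x_o)\}$. *)

From Stdlib Require Import Reals.
Open Scope R_scope.

Definition is_partial_metric {X : Type} (p : X -> X -> R) : Prop :=
  (forall x y, p x x <= p x y) /\
  (forall x y, p x y = p y x) /\
  (forall x y, (p x x = p x y /\ p x y = p y y) <-> x = y) /\
  (forall x y z, p x y <= p x z + p z y - p z z).

Definition is_limit {X : Type} (p : X -> X -> R) (s : nat -> X) (a : X) : Prop :=
  forall eps, 0 < eps -> exists N : nat, forall i, (i > N)%nat -> p a (s i) - p a a < eps.

Definition cauchy_central {X : Type} (p : X -> X -> R) (s : nat -> X) (r : R) : Prop :=
  forall eps, 0 < eps -> exists N : nat, forall i j, (i >= j)%nat -> (j > N)%nat ->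
    Rabs (p (s i) (s j) - r) < eps.

Definition is_cauchy {X : Type} (p : X -> X -> R) (s : nat -> X) : Prop :=
  exists r, cauchy_central p s r.

Definition special_limit {X : Type} (p : X -> X -> R) (s : nat -> X) (a : X) : Prop :=
  exists r, cauchy_central p s r /\ is_limit p s a /\ p a a = r.

Definition pm_complete {X : Type} (p : X -> X -> R) : Prop :=
  forall s : nat -> X, is_cauchy p s -> exists a, special_limit p s a.

Definition cauchy_pair {X : Type} (p : X -> X -> R) (s t : nat -> X) : Prop :=
  exists r : R, forall eps, 0 < eps -> exists N : nat, forall i j, (i > N)%nat -> (j > N)%nat ->
    r - eps < Rmin (p (s i) (s i)) (p (t j) (t j)) /\
    Rmin (p (s i) (s i)) (p (t j) (t j)) <= p (s i) (t j) /\
    p (s i) (t j) < r + eps.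

Fixpoint iter {X : Type} (f : X -> X) (i : nat) (x : X) : X :=
  match i with O => x | S i' => f (iter f i' x) end.

Definition non_expansive {X : Type} (p : X -> X -> R) (f : X -> X) : Prop :=
  forall x y, p (f x) (f y) <= p x y.

Definition weakly_orbitally_continuous {X : Type} (p : X -> X -> R) (f : X -> X) (xo : X) : Prop :=
  forall a, special_limit p (fun i => iter f i xo) a -> is_limit p (fun i => iter f i xo) (f a).

(** The orbits x_i = f^i(x_o) and y_i = g^i(y_o) are Cauchy with the common central
    distance r of the pair, so completeness provides special limits a and b, with
    p(a,a) = p(b,b) = r.  Any limit c of one member of a Cauchy pair and any limit d of
    the other satisfy r <= p(c,c) and p(c,d) <= p(c,c) + p(d,d) - r; hence two such
    limits with self-distance at most r coincide.  By weak orbital continuity f a is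
    again a limit of the f-orbit and, f being non-expansive, p(f a, f a) <= p(a,a) = r;
    so f a = a, likewise g b = b, and finally a = b. *)

From Stdlib Require Import Reals Lra Lia.
Open Scope R_scope.

Definition cauchy_pair_at {X : Type} (p : X -> X -> R) (s t : nat -> X) (r : R) : Prop :=
  forall eps, 0 < eps -> exists N : nat, forall i j, (i > N)%nat -> (j > N)%nat ->
    r - eps < Rmin (p (s i) (s i)) (p (t j) (t j)) /\
    Rmin (p (s i) (s i)) (p (t j) (t j)) <= p (s i) (t j) /\
    p (s i) (t j) < r + eps.

Section PartialMetric.

Variables (X : Type) (p : X -> X -> R).

Lemma cauchy_central_unique s r1 r2 :
  cauchy_central p s r1 -> cauchy_central p s r2 -> r1 = r2.
Proof.
  intros H1 H2.
  enough (Habs : forall eps, 0 < eps -> Rabs (r1 - r2) < eps).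
  { destruct (Req_dec r1 r2) as [| Hne]; [assumption |].
    pose proof (Habs _ (Rabs_pos_lt _ (Rminus_eq_contra _ _ Hne))); lra. }
  intros eps Heps.
  destruct (H1 (eps / 2) ltac:(lra)) as [N1 HN1].
  destruct (H2 (eps / 2) ltac:(lra)) as [N2 HN2].
  pose proof (HN1 (S (N1 + N2)) _ (le_n _) ltac:(lia)) as E1.
  pose proof (HN2 (S (N1 + N2)) _ (le_n _) ltac:(lia)) as E2.
  apply Rabs_def2 in E1, E2; apply Rabs_def1; lra.
Qed.

Lemma special_limit_central s r a :
  cauchy_central p s r -> special_limit p s a -> is_limit p s a /\ p a a = r.
Proof.
  intros Hs [r' [Hs' [Ha Haa]]]; split; [exact Ha |].
  rewrite Haa; exact (cauchy_central_unique _ _ _ Hs' Hs).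
Qed.

Hypothesis Hpm : is_partial_metric p.

Lemma pm_le_self_l x y : p x x <= p x y.
Proof. exact (proj1 Hpm x y). Qed.

Lemma pm_sym x y : p x y = p y x.
Proof. exact (proj1 (proj2 Hpm) x y). Qed.

Lemma pm_le_self_r x y : p y y <= p x y.
Proof. rewrite (pm_sym x y); apply pm_le_self_l. Qed.

Lemma pm_triangle x y z : p x y <= p x z + p z y - p z z.
Proof. exact (proj2 (proj2 (proj2 Hpm)) x y z). Qed.

Lemma pm_eq_of_le x y : p x y <= p x x -> p x y <= p y y -> x = y.
Proof.
  intros Hx Hy; apply (proj1 (proj2 (proj2 Hpm))).
  pose proof (pm_le_self_l x y); pose proof (pm_le_self_r x y); lra.
Qed.

Lemma cauchy_pair_at_sym s t r : cauchy_pair_at p s t r -> cauchy_pair_at p t s r.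
Proof.
  intros Hst eps Heps; destruct (Hst eps Heps) as [N HN]; exists N; intros i j Hi Hj.
  rewrite Rmin_comm, (pm_sym (t i) (s j)); exact (HN j i Hj Hi).
Qed.

Lemma cauchy_pair_at_central s t r : cauchy_pair_at p s t r -> cauchy_central p s r.
Proof.
  intros Hst eps Heps.
  destruct (Hst (eps / 3) ltac:(lra)) as [N HN]; exists N; intros i j Hij Hj.
  destruct (HN i (S N) ltac:(lia) ltac:(lia)) as [Hi [_ Hit]].
  destruct (HN j (S N) ltac:(lia) ltac:(lia)) as [Hj' [_ Hjt]].
  pose proof (Rmin_r (p (s i) (s i)) (p (t (S N)) (t (S N)))).
  pose proof (Rmin_l (p (s j) (s j)) (p (t (S N)) (t (S N)))).
  pose proof (pm_triangle (s i) (s j) (t (S N))).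
  pose proof (pm_le_self_r (s i) (s j)).
  rewrite (pm_sym (t (S N)) (s j)) in *.
  apply Rabs_def1; lra.
Qed.

Lemma cauchy_central_pair_at s r : cauchy_central p s r -> cauchy_pair_at p s s r.
Proof.
  intros Hs eps Heps; destruct (Hs eps Heps) as [N HN]; exists N; intros i j Hi Hj.
  assert (Hsij : Rabs (p (s i) (s j) - r) < eps).
  { destruct (Nat.le_ge_cases i j) as [Hij | Hij].
    - rewrite (pm_sym (s i) (s j)); exact (HN j i Hij Hi).
    - exact (HN i j Hij Hj). }
  pose proof (HN i i (le_n i) Hi) as Hii; pose proof (HN j j (le_n j) Hj) as Hjj.
  apply Rabs_def2 in Hsij, Hii, Hjj.
  pose proof (Rmin_l (p (s i) (s i)) (p (s j) (s j))).
  pose proof (pm_le_self_l (s i) (s j)).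
  repeat split; try apply Rmin_glb_lt; lra.
Qed.

Lemma cauchy_pair_at_le_limit s t r b :
  cauchy_pair_at p s t r -> is_limit p t b -> r <= p b b.
Proof.
  intros Hst Hb; apply Rle_plus_epsilon; intros eps Heps.
  destruct (Hst (eps / 2) ltac:(lra)) as [N1 HN1].
  destruct (Hb (eps / 2) ltac:(lra)) as [N2 HN2].
  set (k := S (N1 + N2)).
  destruct (HN1 k k ltac:(lia) ltac:(lia)) as [Hmin _].
  pose proof (HN2 k ltac:(lia)).
  pose proof (Rmin_r (p (s k) (s k)) (p (t k) (t k))).
  pose proof (pm_le_self_r b (t k)); lra.
Qed.

Lemma cauchy_pair_at_limit_pm_le s t r a b :
  cauchy_pair_at p s t r -> is_limit p s a -> is_limit p t b ->
  p a b <= p a a + p b b - r.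
Proof.
  intros Hst Ha Hb; apply Rle_plus_epsilon; intros eps Heps.
  destruct (Hst (eps / 5) ltac:(lra)) as [N1 HN1].
  destruct (Ha (eps / 5) ltac:(lra)) as [N2 HN2].
  destruct (Hb (eps / 5) ltac:(lra)) as [N3 HN3].
  set (k := S (N1 + N2 + N3)).
  destruct (HN1 k k ltac:(lia) ltac:(lia)) as [Hmin [_ Hst_k]].
  pose proof (HN2 k ltac:(lia)); pose proof (HN3 k ltac:(lia)).
  pose proof (Rmin_l (p (s k) (s k)) (p (t k) (t k))).
  pose proof (Rmin_r (p (s k) (s k)) (p (t k) (t k))).
  pose proof (pm_triangle a b (s k)).
  pose proof (pm_triangle (s k) b (t k)).
  rewrite (pm_sym (t k) b) in *; lra.
Qed.

Lemma cauchy_pair_at_limits_eq s t r a b :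
  cauchy_pair_at p s t r -> is_limit p s a -> is_limit p t b ->
  p a a <= r -> p b b <= r -> a = b.
Proof.
  intros Hst Ha Hb Har Hbr.
  pose proof (cauchy_pair_at_le_limit _ _ _ _ (cauchy_pair_at_sym _ _ _ Hst) Ha).
  pose proof (cauchy_pair_at_le_limit _ _ _ _ Hst Hb).
  pose proof (cauchy_pair_at_limit_pm_le _ _ _ _ _ Hst Ha Hb).
  apply pm_eq_of_le; lra.
Qed.

Lemma special_limit_orbit_fixed (f : X -> X) xo a :
  non_expansive p f -> weakly_orbitally_continuous p f xo ->
  special_limit p (fun i => iter f i xo) a -> f a = a.
Proof.
  intros Hf Hwoc Ha.
  pose proof (Hwoc a Ha) as Hfa.
  destruct Ha as [r [Hs [Ha Haa]]].
  symmetry; apply (cauchy_pair_at_limits_eq _ _ r _ _ (cauchy_central_pair_at _ _ Hs) Ha Hfa).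
  - lra.
  - rewrite <- Haa; apply Hf.
Qed.

End PartialMetric.

Theorem theorem7p9 (X : Type) (p : X -> X -> R) (xo yo : X) (f g : X -> X) :
  is_partial_metric p ->
  pm_complete p ->
  cauchy_pair p (fun i => iter f i xo) (fun i => iter g i yo) ->
  non_expansive p f ->
  non_expansive p g ->
  weakly_orbitally_continuous p f xo ->
  weakly_orbitally_continuous p g yo ->
  exists z, f z = z /\ g z = z.
Proof.
  intros Hpm Hcomplete [r Hpair] Hf Hg Hwf Hwg.
  pose proof (cauchy_pair_at_central _ _ Hpm _ _ _ Hpair) as Hx.
  pose proof (cauchy_pair_at_central _ _ Hpm _ _ _ (cauchy_pair_at_sym _ _ Hpm _ _ _ Hpair)) as Hy.
  destruct (Hcomplete _ (ex_intro _ r Hx)) as [a Ha].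
  destruct (Hcomplete _ (ex_intro _ r Hy)) as [b Hb].
  pose proof (special_limit_orbit_fixed _ _ Hpm _ _ _ Hf Hwf Ha) as Hfa.
  pose proof (special_limit_orbit_fixed _ _ Hpm _ _ _ Hg Hwg Hb) as Hgb.
  destruct (special_limit_central _ _ _ _ _ Hx Ha) as [Ha_lim Haa].
  destruct (special_limit_central _ _ _ _ _ Hy Hb) as [Hb_lim Hbb].
  assert (Hab : a = b)
    by (apply (cauchy_pair_at_limits_eq _ _ Hpm _ _ r _ _ Hpair Ha_lim Hb_lim); lra).
  subst b; exists a; split; assumption.
Qed.
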